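(* Let $P$ be a simplicial polyhedron of genus zero. Then the lattice graph of $P$ contains a facet cycle.
   Context: A simplicial polyhedron is a polyhedron in $\mathbb{R}^3$ all of whose faces (facets) are triangles. The lattice graph $G$ of $P$ has one node for each facet, each edge and each vertex of $P$, with an arc for each incidence between these faces. A facet path in $G$ is a path that alternates between vertex nodes and facet nodes, includes each facet exactly once, and never repeats the same vertex twice in a row; thus in a subpath $(\ldots, v_1, f, v_2, \ldots)$, $v_1$ and $v_2$ are distinct vertices of the facet $f$. A facet cycle is a facet path that is also a cycle (closed). *)

(* Combinatorial model of a simplicial polyhedron of genus 0:
   a triangulated 2-sphere given by its vertex type T and its set of facets. *)
From mathcomp Require Import all_boot.
Set Implicit Arguments. Unset Strict Implicit. Unset Printing Implicit Defensive.

Section Sphere.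
Variable T : finType.
Variable F : {set {set T}}.

Definition edges : {set {set T}} :=
  [set e : {set T} | (#|e| == 2) && [exists f in F, e \subset f]].

Definition link_rel (v : T) : rel T := fun a b => [set v; a; b] \in F.

Definition facet_adj : rel {set T} :=
  fun f g => [&& f \in F, g \in F & #|f :&: g| == 2].

Definition simplicial_sphere : Prop :=
  [/\
      (forall f, f \in F -> #|f| = 3) /\ (forall v : T, exists2 f, f \in F & v \in f),
      (* closed surface: every edge lies in exactly two facets *)
      forall e, e \in edges -> #|[set f in F | e \subset f]| = 2,
      (* manifold: the link of every vertex is connected (hence a single cycle) *)
      forall v a b, v != a -> v != b -> [set v; a] \in edges -> [set v; b] \in edges ->
        connect (link_rel v) a b,
      forall f g, f \in F -> g \in F -> connect facet_adj f g
    & (* genus zero: Euler characteristic V - E + F = 2 *)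
      #|T| + #|F| = #|edges| + 2].

(* A facet cycle in the lattice graph: v_0, f_1, v_1, f_2, ..., f_n, v_0, encoded
   as the cyclic sequence of pairs (v_{i-1}, f_i); consecutive vertices v_{i-1}, v_i
   are distinct vertices of f_i, and every facet occurs exactly once. *)
Definition fc_rel : rel (T * {set T}) :=
  fun x y => [&& x.1 \in x.2, y.1 \in x.2 & x.1 != y.1].

Definition has_facet_cycle : Prop :=
  exists s : seq (T * {set T}),
    cycle fc_rel s /\ perm_eq (map snd s) (enum F).

End Sphere.

From mathcomp Require Import all_boot perm.
Set Implicit Arguments. Unset Strict Implicit. Unset Printing Implicit Defensive.

(* Take a longest sequence [s] of pairs (vertex, facet) satisfying the facet
   cycle condition with pairwise distinct facets.  Maximality has two local
   consequences: if [s] crosses a triangle [h] from [a] to [b], every facet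
   through the third vertex of [h] and [a] or [b] is already on [s] (otherwise
   a detour through it lengthens [s]); and a missing facet across the edge
   [ab] may replace [h] without shortening [s].  Let [k] be "across" [h] when
   [k] is the facet beyond the edge along which [s] crosses [h]; this is a
   partial function.  If a facet [v] adjacent to [s] were missing, repeated
   exchanges show that every facet whose across-orbit reaches [v] has two
   distinct across-preimages with the same property, impossible in a finite
   set.  So [s] is closed under adjacency, hence contains every facet.  The
   Euler relation is only needed to know that there is a facet at all. *)

Lemma set3_of_card3 (T : finType) (A : {set T}) a b :
  #|A| = 3 -> a \in A -> b \in A -> a != b ->
  exists z, [/\ a != z, b != z & A = [set a; b; z]].
Proof.
move=> A3 aA bA ab.
have /eqP/cards1P [z Az] : #|A :\ a :\ b| = 1.
  by move: A3; rewrite (cardsD1 a) aA (cardsD1 b) !inE eq_sym ab bA => -[].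
have : z \in A :\ a :\ b by rewrite Az set11.
rewrite !inE => /and3P [zb za zA]; exists z; rewrite 2![_ == z]eq_sym; split=> //.
apply/setP => x; rewrite !inE.
case: (x =P a) => [-> //|/eqP xa]; case: (x =P b) => [-> //|/eqP xb] /=.
by rewrite -in_set1 -Az !inE xa xb.
Qed.

Lemma two_of_three (T : finType) (A : {set T}) c d z :
  1 < #|[set c; d; z] :&: A| ->
  (c \in A) && (d \in A) || (z \in A) && ((c \in A) || (d \in A)).
Proof.
case/card_gt1P => x [y []]; rewrite !inE -!orbA.
move=> /andP [/or3P [] /eqP -> xA] /andP [/or3P [] /eqP -> yA];
  by rewrite ?eqxx ?xA ?yA ?orbT.
Qed.

Lemma two_preimages_set0 (T : finType) (e : rel T) (B : {set T}) :
  (forall x y y', e x y -> e x y' -> y = y') ->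
  (forall y, y \in B ->
     exists m1 m2, [/\ m1 != m2, m1 \in B, m2 \in B, e m1 y & e m2 y]) ->
  B = set0.
Proof.
move=> e_fun two; apply/eqP; rewrite -cards_eq0 -leqn0 leqNgt; apply/negP => B_gt0.
have in2 y : y \in B -> 2 <= \sum_(m in B) e m y.
  case/two => m1 [m2 [m12 m1B m2B e1 e2]].
  by rewrite (bigD1 m1) // (bigD1 m2) /= ?m2B 1?eq_sym // e1 e2 addnA leq_addr.
have out1 m : \sum_(y in B) e m y <= 1.
  case: (pickP [pred y in B | e m y]) => [y0 /andP [y0B ey0] | none].
    rewrite (bigD1 y0) //= ey0 big1 // => y /andP [_ /negbTE].
    by case ey: (e m y) => //; rewrite (e_fun _ _ _ ey ey0) eqxx.
  by rewrite big1 // => y yB; move: (none y); rewrite /= yB => /= ->.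
have : #|B| * 2 <= #|B|.
  rewrite -sum_nat_const -[leqRHS]sum1_card.
  apply: (@leq_trans (\sum_(y in B) \sum_(m in B) e m y)); first exact: leq_sum.
  by rewrite exchange_big; apply: leq_sum.
by rewrite leqNgt ltn_Pmulr.
Qed.

Lemma map_uniq_inj_in (A B : eqType) (f : A -> B) (s : seq A) :
  uniq (map f s) -> {in s &, injective f}.
Proof.
elim: s => //= z s IHs /andP [zs s_uniq] x y; rewrite !inE.
case/orP => [/eqP-> | xs]; case/orP => [/eqP-> | ys] fxy //.
- by case/negP: zs; rewrite fxy map_f.
- by case/negP: zs; rewrite -fxy map_f.
- exact: IHs.
Qed.

Section Surface.
Variables (T : finType) (F : {set {set T}}).
Hypothesis facet_card3 : forall f, f \in F -> #|f| = 3.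
Hypothesis edge_in_two_facets :
  forall e, e \in edges F -> #|[set f in F | e \subset f]| = 2.

Local Notation facets s := (map snd s).

Lemma facet_eq_sub h k : h \in F -> k \in F -> h \subset k -> h = k.
Proof.
by move=> hF kF hk; apply/eqP; rewrite eqEcard hk (facet_card3 hF) (facet_card3 kF).
Qed.

Lemma facets_across h a b : h \in F -> a \in h -> b \in h -> a != b ->
  exists k, [set f in F | [set a; b] \subset f] :\ h = [set k].
Proof.
move=> hF ah bh ab.
have abh : [set a; b] \subset h by rewrite subUset !sub1set ah bh.
have ab_edge : [set a; b] \in edges F.
  by rewrite inE cards2 ab; apply/existsP; exists h; rewrite hF.
apply/cards1P; move: (edge_in_two_facets ab_edge).
by rewrite (cardsD1 h) inE hF abh add1n => -[->].
Qed.

Lemma exists_facet_across h a b : h \in F -> a \in h -> b \in h -> a != b ->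
  exists k, [/\ k \in F, k != h, a \in k & b \in k].
Proof.
move=> hF ah bh ab; have [k hk] := facets_across hF ah bh ab.
have : k \in [set k] by rewrite set11.
rewrite -hk !inE subUset !sub1set => /and4P [kh kF ak bk].
by exists k.
Qed.

Lemma facet_across_uniq h a b k k' : h \in F -> a \in h -> b \in h -> a != b ->
  k \in F -> k != h -> a \in k -> b \in k ->
  k' \in F -> k' != h -> a \in k' -> b \in k' -> k = k'.
Proof.
move=> hF ah bh ab kF kh ak bk k'F k'h ak' bk'.
have [x hx] := facets_across hF ah bh ab.
have in_x l : l \in F -> l != h -> a \in l -> b \in l -> l = x.
  by move=> lF lh al bl; apply/set1P; rewrite -hx !inE subUset !sub1set lh lF al bl.
by rewrite (in_x k) // (in_x k').
Qed.

Definition partial_facet_cycle (s : seq (T * {set T})) :=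
  [&& cycle (@fc_rel T) s, uniq (facets s) & all (fun x => x.2 \in F) s].

Definition longest (s : seq (T * {set T})) :=
  partial_facet_cycle s /\
  forall s', partial_facet_cycle s' -> size s' <= size s.

Definition traverses (s : seq (T * {set T})) c h d :=
  ((c, h) \in s) && ((next s (c, h)).1 == d).

Definition across (s : seq (T * {set T})) h k :=
  [exists c, exists d, [&& traverses s c h d, k \in F, k != h, c \in k & d \in k]].

Lemma acrossP s h k :
  reflect (exists c d, [/\ traverses s c h d, k \in F, k != h, c \in k & d \in k])
          (across s h k).
Proof.
apply: (iffP existsP) => [[c /existsP [d /and5P ?]] | [c [d /and5P ?]]].
  by exists c, d.
by exists c; apply/existsP; exists d.
Qed.

Lemma partial_uniq s : partial_facet_cycle s -> uniq s.
Proof. by case/and3P => _ /map_uniq. Qed.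

Lemma partial_size s : partial_facet_cycle s -> size s <= #|F|.
Proof.
case/and3P => _ s_uniq s_F; rewrite -(size_map snd) cardE.
apply: uniq_leq_size s_uniq _ => _ /mapP [x xs ->]; rewrite mem_enum.
exact: (allP s_F).
Qed.

Lemma exists_longest s0 : partial_facet_cycle s0 -> exists s, longest s.
Proof.
move=> ps0; pose P n := [exists t : n.-tuple (T * {set T}), partial_facet_cycle t].
have P_size s : partial_facet_cycle s -> P (size s).
  by move=> ps; apply/existsP; exists (in_tuple s).
have P_ub n : P n -> n <= #|F|.
  by case/existsP => t /partial_size; rewrite size_tuple.
case: (ex_maxnP (ex_intro P _ (P_size s0 ps0)) P_ub) => n /existsP [t pt] maxn.
by exists t; split=> // s ps; rewrite size_tuple maxn ?P_size.
Qed.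

Lemma facets_partial s h : partial_facet_cycle s -> h \in facets s -> h \in F.
Proof. by case/and3P => _ _ /allP s_F /mapP [x /s_F xF ->]. Qed.

Lemma traverses_facet s c h d : partial_facet_cycle s -> traverses s c h d ->
  [/\ h \in F, c \in h, d \in h & c != d].
Proof.
case/and3P => s_cyc _ s_F /andP [chs /eqP <-].
have /and3P [ch dh cd] := next_cycle s_cyc chs.
by split => //; apply: (allP s_F _ chs).
Qed.

Lemma traverses_uniq s c h d c' d' : partial_facet_cycle s ->
  traverses s c h d -> traverses s c' h d' -> c = c' /\ d = d'.
Proof.
case/and3P => _ s_uniq _ /andP [chs /eqP <-] /andP [c'hs /eqP <-].
by case: (map_uniq_inj_in s_uniq chs c'hs erefl) => ->.
Qed.

Lemma exists_traverses s h : h \in facets s -> exists c d, traverses s c h d.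
Proof.
case/mapP => [[c h'] chs /= ->]; exists c, (next s (c, h')).1.
by rewrite /traverses chs eqxx.
Qed.

Lemma across_facets s h k : across s h k -> h \in facets s.
Proof. by case/acrossP => c [d [/andP [chs _] _ _ _ _]]; apply: (map_f snd chs). Qed.

Lemma across_fun s h k k' : partial_facet_cycle s ->
  across s h k -> across s h k' -> k = k'.
Proof.
move=> ps /acrossP [c [d [tr kF kh ck dk]]] /acrossP [c' [d' [tr' k'F k'h ck' dk']]].
have [c'E d'E] := traverses_uniq ps tr tr'; subst c' d'.
have [hF ch dh cd] := traverses_facet ps tr.
exact: (facet_across_uniq hF ch dh cd kF kh ck dk).
Qed.

Lemma partial_rot i s : partial_facet_cycle (rot i s) = partial_facet_cycle s.
Proof.
by rewrite /partial_facet_cycle rot_cycle map_rot rot_uniq (eq_all_r (mem_rot i s)).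
Qed.

Lemma traverses_rot s a h b : partial_facet_cycle s -> traverses s a h b ->
  exists i y u, rot i s = [:: (a, h), y & u] /\ y.1 = b.
Proof.
move=> ps tr; case/andP: (tr) => ahs /eqP <-.
case: (rot_to ahs) => i [|y u] s_rot.
  have : partial_facet_cycle (rot i s) by rewrite partial_rot.
  by rewrite s_rot /partial_facet_cycle /= /fc_rel eqxx !andbF.
exists i, y, u; split => //.
by rewrite -(next_rot i (partial_uniq ps)) s_rot /= eqxx.
Qed.

Lemma partial_detour a h y u z p q :
  partial_facet_cycle [:: (a, h), y & u] ->
  p \in F -> q \in F -> uniq [:: p, q & facets (y :: u)] ->
  fc_rel (a, p) (z, q) -> fc_rel (z, q) y ->
  partial_facet_cycle [:: (a, p), (z, q), y & u].
Proof.
rewrite /partial_facet_cycle /cycle /= !rcons_path.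
case/and3P => /and3P [_ yu uy] _ /andP [_ yuF] pF qF pq_uniq apz zqy.
by rewrite apz zqy yu pq_uniq pF qF yuF /= !andbT; exact: uy.
Qed.

(* Otherwise [s] could be lengthened by a detour through [z] using [k]. *)
Lemma longest_third_vertex s a h b z k : longest s -> traverses s a h b ->
  z \in h -> a != z -> b != z -> k \in F -> z \in k -> (a \in k) || (b \in k) ->
  k \in facets s.
Proof.
move=> [ps s_max] tr zh az bz kF zk abk; apply/negPn/negP => ks.
have [hF ah bh _] := traverses_facet ps tr.
have [i [y [u [s_rot yb]]]] := traverses_rot ps tr.
have pr : partial_facet_cycle [:: (a, h), y & u] by rewrite -s_rot partial_rot.
have hu : uniq (h :: facets (y :: u)) by case/and3P: pr.
have k_new : k \notin h :: facets (y :: u).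
  by rewrite -[h :: _]/(facets [:: (a, h), y & u]) -s_rot map_rot mem_rot.
have longer p q : size s < size [:: (a, p), (z, q), y & u].
  by rewrite -(size_rot i) s_rot.
have fc_a (p q : {set T}) : a \in p -> z \in p -> fc_rel (a, p) (z, q).
  by move=> ap zp; rewrite /fc_rel /= ap zp az.
have fc_b (q : {set T}) : z \in q -> b \in q -> fc_rel (z, q) y.
  by move=> zq bq; rewrite /fc_rel yb zq bq eq_sym.
case/orP: abk => [ak | bk].
- have kh_uniq : uniq [:: k, h & facets (y :: u)] by rewrite cons_uniq k_new hu.
  have := s_max _ (partial_detour pr kF hF kh_uniq (fc_a k h ak zk) (fc_b h zh bh)).
  by rewrite leqNgt longer.
- have hk_uniq : uniq [:: h, k & facets (y :: u)].
    move: k_new hu; set l := facets (y :: u); rewrite /= !in_cons !negb_or.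
    by case/andP => kh kl /andP [hl ->]; rewrite eq_sym kh kl hl.
  have := s_max _ (partial_detour pr hF kF hk_uniq (fc_a h k ah zh) (fc_b k zk bk)).
  by rewrite leqNgt longer.
Qed.

Lemma longest_across s m h : longest s -> m \in facets s ->
  h \in F -> h \notin facets s -> 1 < #|m :&: h| -> across s m h.
Proof.
move=> ls ms hF hs mh2; have [c [d tr]] := exists_traverses ms.
have [mF cm dm cd] := traverses_facet ls.1 tr.
have [z [zc zd m_eq]] := set3_of_card3 (facet_card3 mF) cm dm cd.
have hm : h != m by apply: contraNneq hs => ->.
move: mh2; rewrite {1}m_eq => /two_of_three /orP [/andP [ch dh] | /andP [zh cdh]].
  by apply/acrossP; exists c, d.
have zm : z \in m by rewrite m_eq !inE eqxx orbT.
by move: hs; rewrite (longest_third_vertex ls tr zm zc zd hF zh cdh).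
Qed.

Definition exchange (f g : {set T}) (x : T * {set T}) := (x.1, tperm f g x.2).

Lemma exchangeK f g : involutive (exchange f g).
Proof. by case=> c h; rewrite /exchange /= tpermK. Qed.

Lemma exchange_inj f g : injective (exchange f g).
Proof. exact: inv_inj (@exchangeK f g). Qed.

Lemma facets_exchange s f g h :
  (h \in facets (map (exchange f g) s)) = (tperm f g h \in facets s).
Proof.
rewrite -map_comp (eq_map (_ : snd \o exchange f g =1 tperm f g \o snd)) //.
by rewrite map_comp -{1}(tpermK f g h) (mem_map (@perm_inj _ (tperm f g))).
Qed.

Lemma traverses_exchange s f g c h d : uniq s ->
  traverses (map (exchange f g) s) c h d = traverses s c (tperm f g h) d.
Proof.
move=> s_uniq; rewrite /traverses -[(c, h)](@exchangeK f g) /=.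
by rewrite (mem_map (@exchange_inj f g)) (next_map (@exchange_inj f g) s_uniq).
Qed.

Lemma across_exchange s f g h k : uniq s -> f != h -> g != h ->
  across (map (exchange f g) s) h k = across s h k.
Proof.
move=> s_uniq fh gh; apply: eq_existsb => c; apply: eq_existsb => d.
by rewrite traverses_exchange // tpermD.
Qed.

Lemma longest_exchange s a f b g : longest s -> traverses s a f b ->
  g \in F -> g \notin facets s -> a \in g -> b \in g ->
  longest (map (exchange f g) s).
Proof.
move=> [ps s_max] tr gF gs ag bg; split; last by move=> s' /s_max; rewrite size_map.
have s_uniq := partial_uniq ps; have [fF af bf ab] := traverses_facet ps tr.
case/and3P: ps => s_cyc facets_uniq s_F.
have not_g x : x \in s -> g != x.2 by move=> xs; apply: contraNneq gs => ->; apply: map_f.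
have at_f x : x \in s -> x.2 = f -> x = (a, f).
  by move=> xs xf; apply: (map_uniq_inj_in facets_uniq) => //; case/andP: tr.
apply/and3P; split.
- rewrite cycle_map; apply: (cycle_from_next s_uniq) => x xs /=.
  case: (f =P x.2) => [/esym/(at_f x xs) -> | /eqP fx].
    by case/andP: tr => _ /eqP nb; rewrite /fc_rel /= tpermL nb ag bg ab.
  by rewrite /fc_rel /= tpermD ?not_g //; exact: (next_cycle s_cyc xs).
- by rewrite -map_comp (eq_map (_ : snd \o exchange f g =1 tperm f g \o snd)) //
    map_comp map_inj_uniq //; apply: perm_inj.
- apply/allP => _ /mapP [x xs ->] /=.
  case: (f =P x.2) => [<- | /eqP fx]; first by rewrite tpermL.
  by rewrite tpermD ?not_g //; apply: (allP s_F).
Qed.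

Lemma across_exchange_back s a f b g h : partial_facet_cycle s ->
  traverses s a f b -> g \in F -> g \notin facets s -> a \in g -> b \in g ->
  across (map (exchange f g) s) g h -> h = f.
Proof.
move=> ps tr gF gs ag bg /acrossP [c [d [tr' hF hg ch dh]]].
rewrite traverses_exchange ?tpermR ?partial_uniq // in tr'.
have [ac bd] := traverses_uniq ps tr tr'; subst c d.
have [fF af bf ab] := traverses_facet ps tr.
have fg : f != g by apply: contraNneq gs => <-; case/andP: tr => /(map_f snd).
exact: (facet_across_uniq gF ag bg ab hF hg ch dh fF fg af bf).
Qed.

Lemma belast_across_facets s h q :
  path (across s) h q -> all (mem (facets s)) (belast h q).
Proof.
by elim: q h => //= k q IHq h /andP [hk kq]; rewrite (across_facets hk) IHq.
Qed.

Lemma path_across_exchange s f g h q : partial_facet_cycle s ->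
  across s f g -> g \notin facets s -> all (mem (facets s)) (h :: q) ->
  path (across s) h q -> path (across (map (exchange f g) s)) h q.
Proof.
move=> ps fg gs; apply: sub_in_path => y x ys xs yx.
have gy : g != y by apply: contraNneq gs => ->.
have fy : f != y.
  by apply: contraNneq gs => fE; rewrite fE in fg; rewrite (across_fun ps fg yx).
by rewrite across_exchange ?partial_uniq.
Qed.

(* Induction on the path: exchanging its last facet for [g] gives a longest
   sequence in which that facet is the missing one. *)
Lemma across_path_to_gap p : forall s g h, longest s -> g \in F ->
  g \notin facets s -> path (across s) h (rcons p g) ->
  forall m, m \in F -> m != h -> 1 < #|h :&: m| -> ~~ across s h m ->
  across s m h.
Proof.
elim/last_ind: p => [|p f IHp] s g h ls gF gs.
  rewrite /= andbT => hg m mF mh hm2 hm.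
  have ms : m \in facets s.
    by apply: contraNT hm => ms; apply: longest_across (across_facets hg) _ _ _.
  case/acrossP: hg => a [b [tr _ _ ag bg]].
  have [hF _ _ _] := traverses_facet ls.1 tr.
  have gm : g != m by apply: contraNneq gs => ->.
  have hm_ne : h != m by rewrite eq_sym.
  rewrite -(@across_exchange s h g m h (partial_uniq ls.1)) //.
  apply: longest_across (longest_exchange ls tr gF gs ag bg) _ hF _ _.
  - by rewrite facets_exchange tpermD.
  - by rewrite facets_exchange tpermL.
  - by rewrite setIC.
move=> hpg; have := belast_across_facets hpg; rewrite belast_rcons => hp_s.
move: hpg; rewrite rcons_path last_rcons => /andP [hpf fg] m mF mh hm2 hm.
case/acrossP: (fg) => a [b [tr _ _ ag bg]].
have [fF _ _ _] := traverses_facet ls.1 tr.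
have s_uniq := partial_uniq ls.1.
have fs' : f \notin facets (map (exchange f g) s) by rewrite facets_exchange tpermL.
set s' := map (exchange f g) s in fs' *.
have gh : g != h by apply: contraNneq gs => ->; case/andP: hp_s.
have hm' : ~~ across s' h m.
  apply: contra hm => hm'.
  have fh : f != h by apply: contraNneq fs' => ->; apply: across_facets hm'.
  by rewrite across_exchange in hm'.
have mh' := IHp _ f h (longest_exchange ls tr gF gs ag bg) fF fs'
  (path_across_exchange ls.1 fg gs hp_s hpf) m mF mh hm2 hm'.
have fm : f != m by apply: contraNneq fs' => ->; apply: across_facets mh'.
have gm : g != m.
  apply: contraNneq hm => gE; rewrite -gE in mh' *.
  by rewrite (across_exchange_back ls.1 tr gF gs ag bg mh').
by rewrite -(@across_exchange s f g m h s_uniq).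
Qed.

Lemma across_two_preimages s v h p : longest s -> v \in F ->
  v \notin facets s -> path (across s) h (rcons p v) ->
  exists m1 m2, [/\ m1 != m2, across s m1 h & across s m2 h].
Proof.
move=> ls vF vs hpv.
have hs : h \in facets s.
  by move: (belast_across_facets hpv); rewrite belast_rcons => /andP [].
have [c [d tr]] := exists_traverses hs.
have [hF ch dh cd] := traverses_facet ls.1 tr.
have [z [zc zd h_eq]] := set3_of_card3 (facet_card3 hF) ch dh cd.
have zh : z \in h by rewrite h_eq !inE eqxx orbT.
have h_sub k : k \in F -> c \in k -> d \in k -> z \in k -> k = h.
  move=> kF ck dk zk; apply/esym/facet_eq_sub => //.
  by rewrite h_eq !subUset !sub1set ck dk zk.
have to_h m x : m \in F -> m != h -> x \in h -> x != z -> x \in m -> z \in m ->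
    across s m h.
  move=> mF mh xh xz xm zm; apply: (across_path_to_gap ls vF vs hpv) => //.
    by apply/card_gt1P; exists x, z; rewrite !inE xh xm zh zm.
  apply/negP => /acrossP [c' [d' [tr' _ _ c'm d'm]]].
  have [cc' dd'] := traverses_uniq ls.1 tr tr'; subst c' d'.
  by move: mh; rewrite (h_sub m) ?eqxx.
have [m1 [m1F m1h cm1 zm1]] := exists_facet_across hF ch zh zc.
have [m2 [m2F m2h dm2 zm2]] := exists_facet_across hF dh zh zd.
exists m1, m2; split; [|exact: (to_h m1 c) | exact: (to_h m2 d)].
by apply: contraNneq m1h => m12; rewrite (h_sub m1) // m12.
Qed.

Lemma longest_adj_closed s u v : longest s -> u \in facets s ->
  v \in F -> 1 < #|u :&: v| -> v \in facets s.
Proof.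
move=> ls us vF uv2; apply: contraT => vs.
pose B := [set h | (h != v) && connect (across s) h v].
have in_B h m : h \in B -> across s m h -> m \in B.
  rewrite !inE => /andP [_ hv] mh; rewrite (connect_trans (connect1 mh) hv) andbT.
  by apply: contraNneq vs => <-; apply: across_facets mh.
have uB : u \in B.
  rewrite inE (connect1 (longest_across ls us vF vs uv2)) andbT.
  by apply: contraNneq vs => <-.
suff : B = set0 by move/setP/(_ u); rewrite uB inE.
apply: (@two_preimages_set0 _ (across s)) => [h k k' | h hB].
  exact: across_fun ls.1.
move: (hB); rewrite inE => /andP [hv /connectP [q]].
case/lastP: q => [_ hvE | p x]; first by rewrite hvE eqxx in hv.
rewrite last_rcons => hpv xv; subst x.
have [m1 [m2 [m12 m1h m2h]]] := across_two_preimages ls vF vs hpv.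
by exists m1, m2; split=> //; apply: (in_B h).
Qed.

Lemma exists_partial f : f \in F ->
  exists2 s, partial_facet_cycle s & f \in facets s.
Proof.
move=> fF; have /card_gt1P [a [b [af bf ab]]] : 1 < #|f| by rewrite facet_card3.
have [g [gF gf ag bg]] := exists_facet_across fF af bf ab.
exists [:: (a, f); (b, g)]; last by rewrite inE eqxx.
by rewrite /partial_facet_cycle /= /fc_rel af bf ag bg ab eq_sym ab inE eq_sym gf fF gF.
Qed.

Lemma longest_all_facets s : longest s -> s != [::] ->
  (forall f g, f \in F -> g \in F -> connect (facet_adj F) f g) ->
  forall h, h \in F -> h \in facets s.
Proof.
case: s => // x s' ls _ conn h hF.
have xs : x.2 \in facets (x :: s') by rewrite inE eqxx.
have /connectP [q xq ->] := conn _ _ (facets_partial ls.1 xs) hF.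
elim: q x.2 xs xq => //= k q IHq f fs /andP [/and3P [_ kF /eqP fk2] kq].
by apply: IHq kq; apply: longest_adj_closed ls fs kF _; rewrite fk2.
Qed.

End Surface.

Theorem theorem3 (T : finType) (F : {set {set T}}) :
  simplicial_sphere F -> has_facet_cycle F.
Proof.
case=> [[tri cover] edge2 _ conn euler].
have [f0 f0F] : exists f, f \in F.
  case: (set_0Vmem F) => [F0 | [f fF]]; last by exists f.
  move: euler.
  have -> : #|T| = 0 by apply: eq_card0 => v; have [f] := cover v; rewrite F0 inE.
  by rewrite F0 cards0 addn2.
have [s0 ps0 f0s0] := exists_partial tri edge2 f0F.
have [s ls] := exists_longest ps0.
have s_nil : s != [::].
  by move: (ls.2 _ ps0); case: s {ls} => //; case: s0 f0s0 {ps0}.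
exists s; split; first by case/and3P: ls.1.
apply: uniq_perm; [by case/and3P: ls.1 | exact: enum_uniq | move=> h].
rewrite mem_enum; apply/idP/idP; first exact: facets_partial ls.1.
exact: (longest_all_facets tri edge2 ls s_nil conn).
Qed.
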